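(* Let $\beta>0$ be fixed. For $0<a<s$ define the (extended) Erlang C function $$C(s,a)=\left(\int_0^\infty (1+t)^s\,\frac{a t}{1+t}\,e^{-a t}\,dt\right)^{-1},$$ and let $C_*(\beta)=\left(1+\beta\,\frac{\Phi(\beta)}{\phi(\beta)}\right)^{-1}$, where $\Phi$ and $\phi$ are the distribution function and density of a standard normal random variable. Then the function $a\mapsto C(a+\beta\sqrt{a},a)$ is strictly decreasing on $(0,\infty)$. In particular, $C(a+\beta\sqrt{a},a)>C_*(\beta)$ for every $a>0$.
   Context: Note that $a<a+\beta\sqrt a$ for $a>0,\beta>0$, so $C(a+\beta\sqrt a,a)$ is well defined. It is a known result (Halfin–Whitt) that $\lim_{a\to\infty}C(a+\beta\sqrt{a},a)=C_*(\beta)$; this may be used. *)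

From Stdlib Require Import Reals Lra ClassicalEpsilon.
Open Scope R_scope.

Definition has_integral_0_infty (f : R -> R) (l : R) : Prop :=
  (forall b, 0 <= b -> inhabited (Riemann_integrable f 0 b)) /\
  (forall eps, 0 < eps -> exists M, forall b (pr : Riemann_integrable f 0 b),
      M <= b -> Rabs (RiemannInt pr - l) < eps).

Definition has_integral_minfty_to (f : R -> R) (x l : R) : Prop :=
  (forall c, c <= x -> inhabited (Riemann_integrable f c x)) /\
  (forall eps, 0 < eps -> exists M, forall c (pr : Riemann_integrable f c x),
      c <= M -> Rabs (RiemannInt pr - l) < eps).

(* The value of the improper integral (chosen classically; 0 if it does not exist). *)
Definition int_0_infty (f : R -> R) : R :=
  epsilon (inhabits 0) (fun l => has_integral_0_infty f l).

Definition int_minfty_to (f : R -> R) (x : R) : R :=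
  epsilon (inhabits 0) (fun l => has_integral_minfty_to f x l).

Definition ErlangC (s a : R) : R :=
  / int_0_infty (fun t => Rpower (1 + t) s * (a * t / (1 + t)) * exp (- (a * t))).

Definition std_normal_pdf (x : R) : R := exp (- (x ^ 2) / 2) / sqrt (2 * PI).
Definition std_normal_cdf (x : R) : R := int_minfty_to std_normal_pdf x.

Definition Cstar (beta : R) : R :=
  / (1 + beta * (std_normal_cdf beta / std_normal_pdf beta)).

From Stdlib Require Import Reals Lra ClassicalEpsilon.
From Coquelicot Require Import Coquelicot.
Open Scope R_scope.

(* Write n = sqrt a.  Substituting 1 + t = exp (z / n) and integrating by
   parts, the Erlang integral over [0, b] equals
       1 - h_n(Z) + beta * int_0^Z h_n,      Z = n * ln (1 + b),
   where h_n(z) = exp (beta z - n^2 (exp (z/n) - 1 - z/n)).  Hence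
   C(a + beta sqrt a, a) = 1 / (1 + beta * L_n) with L_n = int_0^oo h_n.
   Since n^2 (exp (z/n) - 1 - z/n) strictly decreases in n and exceeds z^2/2,
   h_n strictly increases with n and stays below g(z) = exp (beta z - z^2/2).
   Finally int_0^oo g = Phi(beta) / phi(beta) (substitute x = beta - z), so
   C_*(beta) = 1 / (1 + beta * int_0^oo g), and both claims follow by
   comparing integrals. *)

Lemma exp_le_mono (x y : R) : x <= y -> exp x <= exp y.
Proof. intros [Hlt | ->]; [left; apply exp_increasing; exact Hlt | lra]. Qed.

Lemma exp_remainder_gt_half_square (y : R) : 0 < y -> y^2/2 < exp y - 1 - y.
Proof.
intros Hy.
destruct (MVT_cor2 (fun y => exp y - 1 - y - y^2/2) (fun y => exp y - 1 - y) 0 y Hy)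
  as [c [Hmvt Hc]].
{ intros c _. apply is_derive_Reals. auto_derive; auto. field. }
rewrite exp_0 in Hmvt.
assert (1 + c < exp c) by (apply exp_ineq1; lra).
assert (0 < (exp c - 1 - c) * (y - 0)) by (apply Rmult_lt_0_compat; lra).
lra.
Qed.

(* (y - 1) e^y + 1 > 0 for y > 0: its derivative is y e^y. *)
Lemma exp_aux1_pos (y : R) : 0 < y -> 0 < (y - 1) * exp y + 1.
Proof.
intros Hy.
destruct (MVT_cor2 (fun y => (y - 1) * exp y + 1) (fun y => y * exp y) 0 y Hy)
  as [c [Hmvt Hc]].
{ intros c _. apply is_derive_Reals. auto_derive; auto. ring. }
rewrite exp_0 in Hmvt.
assert (0 < c * exp c * (y - 0)).
{ apply Rmult_lt_0_compat; [apply Rmult_lt_0_compat; [lra | apply exp_pos] | lra]. }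
lra.
Qed.

(* (y - 2) e^y + y + 2 > 0 for y > 0: its derivative is (y - 1) e^y + 1. *)
Lemma exp_aux2_pos (y : R) : 0 < y -> 0 < (y - 2) * exp y + y + 2.
Proof.
intros Hy.
destruct (MVT_cor2 (fun y => (y - 2) * exp y + y + 2) (fun y => (y - 1) * exp y + 1) 0 y Hy)
  as [c [Hmvt Hc]].
{ intros c _. apply is_derive_Reals. auto_derive; auto. ring. }
rewrite exp_0 in Hmvt.
assert (0 < ((c - 1) * exp c + 1) * (y - 0)).
{ apply Rmult_lt_0_compat; [apply exp_aux1_pos | ]; lra. }
lra.
Qed.

(* For z > 0 the scaled remainder n^2 (e^{z/n} - 1 - z/n) is strictly
   decreasing in n > 0; its n-derivative is -n((z/n - 2) e^{z/n} + z/n + 2). *)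
Lemma scaled_exp_remainder_decreasing (z n1 n2 : R) : 0 < z -> 0 < n1 -> n1 < n2 ->
  n2^2 * (exp (z/n2) - 1 - z/n2) < n1^2 * (exp (z/n1) - 1 - z/n1).
Proof.
intros Hz Hn1 Hn12.
destruct (MVT_cor2 (fun n => n^2 * (exp (z/n) - 1) - n * z)
   (fun c => 2 * c * (exp (z/c) - 1) - z * exp (z/c) - z) n1 n2 Hn12) as [c [Hmvt Hc]].
{ intros c Hc. apply is_derive_Reals. auto_derive; [lra |]. unfold Rdiv. field. lra. }
assert (Hpos : 0 < (z/c - 2) * exp (z/c) + z/c + 2).
{ apply exp_aux2_pos, Rdiv_lt_0_compat; lra. }
replace (2 * c * (exp (z/c) - 1) - z * exp (z/c) - z)
  with (- (c * ((z/c - 2) * exp (z/c) + z/c + 2))) in Hmvt by (field; lra).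
assert (0 < c * ((z/c - 2) * exp (z/c) + z/c + 2) * (n2 - n1)).
{ apply Rmult_lt_0_compat; [apply Rmult_lt_0_compat |]; lra. }
replace (n1^2 * (exp (z/n1) - 1 - z/n1)) with (n1^2 * (exp (z/n1) - 1) - n1 * z)
  by (field; lra).
replace (n2^2 * (exp (z/n2) - 1 - z/n2)) with (n2^2 * (exp (z/n2) - 1) - n2 * z)
  by (field; lra).
lra.
Qed.

Lemma eq_of_common_approx (l1 l2 : R) :
  (forall eps, 0 < eps -> exists y, Rabs (y - l1) < eps /\ Rabs (y - l2) < eps) ->
  l1 = l2.
Proof.
intros Happrox.
destruct (Req_dec l1 l2) as [Heq | Hne]; [exact Heq | exfalso].
assert (Hd : 0 < Rabs (l1 - l2) / 2) by (apply Rdiv_lt_0_compat; [apply Rabs_pos_lt |]; lra).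
destruct (Happrox _ Hd) as [y [H1 H2]].
assert (Rabs (l1 - l2) <= Rabs (y - l1) + Rabs (y - l2)).
{ replace (l1 - l2) with (- (y - l1) + (y - l2)) by ring.
  rewrite <- (Rabs_Ropp (y - l1)). apply Rabs_triang. }
lra.
Qed.

Lemma int_0_infty_val (f : R -> R) (l : R) :
  has_integral_0_infty f l -> int_0_infty f = l.
Proof.
intros Hl.
assert (Hchosen : has_integral_0_infty f (int_0_infty f)).
{ unfold int_0_infty, int_minfty_to. apply epsilon_spec. exists l; exact Hl. }
destruct Hchosen as [Hint H1], Hl as [_ H2].
apply eq_of_common_approx. intros eps Heps.
destruct (H1 eps Heps) as [M1 HM1], (H2 eps Heps) as [M2 HM2].
set (b := Rmax 0 (Rmax M1 M2)).
destruct (Hint b (Rmax_l _ _)) as [pr].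
exists (RiemannInt pr). split.
- apply HM1. unfold b. eapply Rle_trans; [apply Rmax_l | apply Rmax_r].
- apply HM2. unfold b. eapply Rle_trans; [apply Rmax_r | apply Rmax_r].
Qed.

Lemma int_minfty_to_val (f : R -> R) (x l : R) :
  has_integral_minfty_to f x l -> int_minfty_to f x = l.
Proof.
intros Hl.
assert (Hchosen : has_integral_minfty_to f x (int_minfty_to f x)).
{ unfold int_0_infty, int_minfty_to. apply epsilon_spec. exists l; exact Hl. }
destruct Hchosen as [Hint H1], Hl as [_ H2].
apply eq_of_common_approx. intros eps Heps.
destruct (H1 eps Heps) as [M1 HM1], (H2 eps Heps) as [M2 HM2].
set (c := Rmin x (Rmin M1 M2)).
destruct (Hint c (Rmin_l _ _)) as [pr].
exists (RiemannInt pr). split.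
- apply HM1. unfold c. eapply Rle_trans; [apply Rmin_r | apply Rmin_l].
- apply HM2. unfold c. eapply Rle_trans; [apply Rmin_r | apply Rmin_r].
Qed.

Definition is_integral_from0 (q : R -> R) (L : R) : Prop :=
  (forall Z, 0 <= Z -> RInt q 0 Z <= L) /\
  (forall eps, 0 < eps -> exists M, 0 <= M /\ forall Z, M <= Z -> L - eps < RInt q 0 Z).

Lemma ex_RInt_everywhere (q : R -> R) (a b : R) :
  (forall z, continuous q z) -> ex_RInt q a b.
Proof. intros Hc. apply (ex_RInt_continuous (V := R_CompleteNormedModule)); auto. Qed.

Lemma RInt_from0_mono (q : R -> R) (Z1 Z2 : R) :
  (forall z, continuous q z) -> (forall z, 0 <= z -> 0 <= q z) ->
  0 <= Z1 <= Z2 -> RInt q 0 Z1 <= RInt q 0 Z2.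
Proof.
intros Hc Hq HZ.
rewrite <- (RInt_Chasles q 0 Z1 Z2) by (apply ex_RInt_everywhere; exact Hc).
assert (0 <= RInt q Z1 Z2); [| change (plus ?u ?v) with (u + v); lra].
apply RInt_ge_0; [lra | apply ex_RInt_everywhere; exact Hc |].
intros z Hz. apply Hq. lra.
Qed.

Lemma RInt_scaled_exp_neg (K Z : R) :
  RInt (fun z => K * exp (- z)) 0 Z = K - K * exp (- Z).
Proof.
apply is_RInt_unique.
assert (Hvalue : K - K * exp (- Z)
                 = minus ((fun z => - K * exp (- z)) Z) ((fun z => - K * exp (- z)) 0)).
{ cbv beta. rewrite Ropp_0, exp_0. change (minus ?u ?v) with (u - v). ring. }
rewrite Hvalue.
apply (is_RInt_derive (fun z => - K * exp (- z))).
- intros z _. auto_derive; auto. ring.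
- intros z _. apply (ex_derive_continuous (fun z => K * exp (- z))). auto_derive; auto.
Qed.

(* A continuous q with 0 <= q z <= K e^{-z} on [0, +oo) has an integral there:
   the supremum of its (bounded, nondecreasing) partial integrals. *)
Lemma integral_from0_exists (q : R -> R) (K : R) :
  (forall z, continuous q z) ->
  (forall z, 0 <= z -> 0 <= q z <= K * exp (- z)) ->
  exists L, is_integral_from0 q L.
Proof.
intros Hc Hq.
assert (HK : 0 <= K).
{ destruct (Hq 0 (Rle_refl 0)) as [H0 H]. rewrite Ropp_0, exp_0 in H. lra. }
set (partials := fun x => exists Z, 0 <= Z /\ x = RInt q 0 Z).
assert (Hbound : bound partials).
{ exists K. intros x [Z [HZ ->]].
  apply Rle_trans with (RInt (fun z => K * exp (- z)) 0 Z).
  - apply RInt_le; [exact HZ | apply ex_RInt_everywhere; exact Hc | |].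
    + apply ex_RInt_everywhere. intros z.
      apply (ex_derive_continuous (fun z => K * exp (- z))). auto_derive; auto.
    + intros z Hz. apply Hq. lra.
  - rewrite RInt_scaled_exp_neg.
    assert (0 <= K * exp (- Z)) by (apply Rmult_le_pos; [lra | left; apply exp_pos]).
    lra. }
destruct (completeness partials Hbound) as [L [Hub Hleast]].
{ exists (RInt q 0 0), 0. split; [lra | reflexivity]. }
exists L. split.
- intros Z HZ. apply Hub. exists Z; auto.
- intros eps Heps.
  destruct (Classical_Prop.classic (exists Z, 0 <= Z /\ L - eps < RInt q 0 Z))
    as [[Z [HZ Hclose]] | Hfar].
  + exists Z. split; [exact HZ |]. intros Z' HZ'.
    eapply Rlt_le_trans; [exact Hclose |].
    apply RInt_from0_mono; [exact Hc | intros; apply Hq; auto | lra].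
  + exfalso. assert (L <= L - eps); [| lra].
    apply Hleast. intros x [Z [HZ ->]].
    apply Rnot_lt_le. intros Hlt. apply Hfar. exists Z; auto.
Qed.

Lemma integral_from0_nonneg (q : R -> R) (L : R) : is_integral_from0 q L -> 0 <= L.
Proof. intros [Hub _]. specialize (Hub 0 (Rle_refl 0)). rewrite RInt_point in Hub. exact Hub. Qed.

Lemma integral_from0_lt (q1 q2 : R -> R) (L1 L2 : R) :
  (forall z, continuous q1 z) -> (forall z, continuous q2 z) ->
  (forall z, 0 < z -> q1 z < q2 z) ->
  is_integral_from0 q1 L1 -> is_integral_from0 q2 L2 -> L1 < L2.
Proof.
intros Hc1 Hc2 Hlt [_ Hlim1] [Hub2 _].
set (gap := RInt q2 0 1 - RInt q1 0 1).
assert (Hgap : 0 < gap).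
{ assert (RInt q1 0 1 < RInt q2 0 1); [| unfold gap; lra].
  apply RInt_lt; [lra | intros; apply Hc2 | intros; apply Hc1 |].
  intros z Hz. apply Hlt. lra. }
assert (Hgap_persists : forall Z, 1 <= Z -> RInt q1 0 Z + gap <= RInt q2 0 Z).
{ intros Z HZ. unfold gap.
  rewrite <- (RInt_Chasles q1 0 1 Z) by (apply ex_RInt_everywhere; assumption).
  rewrite <- (RInt_Chasles q2 0 1 Z) by (apply ex_RInt_everywhere; assumption).
  change (plus ?u ?v) with (u + v).
  assert (RInt q1 1 Z <= RInt q2 1 Z); [| lra].
  apply RInt_le; try (apply ex_RInt_everywhere; assumption); [lra |].
  intros z Hz. left. apply Hlt. lra. }
destruct (Hlim1 (gap / 2) ltac:(lra)) as [M [HM Hclose]].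
specialize (Hclose (Rmax M 1) (Rmax_l _ _)).
specialize (Hgap_persists (Rmax M 1) (Rmax_r _ _)).
specialize (Hub2 (Rmax M 1) ltac:(pose proof (Rmax_r M 1); lra)).
lra.
Qed.

Lemma scaled_exp_neg_eventually_small (K eps : R) : 0 < eps ->
  exists M, 0 <= M /\ forall Z, M <= Z -> K * exp (- Z) < eps.
Proof.
intros Heps.
set (M := Rmax 0 (ln (Rabs K / eps + 1))).
exists M. split; [apply Rmax_l |]. intros Z HZ.
assert (Hq : 0 <= Rabs K / eps) by (apply Rdiv_le_0_compat; [apply Rabs_pos | lra]).
assert (Hgrow : Rabs K / eps + 1 <= exp Z).
{ rewrite <- (exp_ln (Rabs K / eps + 1)) by lra.
  apply exp_le_mono. eapply Rle_trans; [apply Rmax_r | exact HZ]. }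
assert (HeZ := exp_pos Z).
apply Rle_lt_trans with (Rabs K * exp (- Z)).
{ apply Rmult_le_compat_r; [left; apply exp_pos | apply Rle_abs]. }
rewrite exp_Ropp. apply (Rmult_lt_reg_r (exp Z)); [exact HeZ |].
rewrite Rmult_assoc, Rinv_l by lra.
apply (Rmult_le_compat_l eps) in Hgrow; [| lra].
replace (eps * (Rabs K / eps + 1)) with (Rabs K + eps) in Hgrow by (field; lra).
nra.
Qed.

(* The combination 1 - q(Z) + beta int_0^Z q, which is the shape of the Erlang
   partial integrals, tends to 1 + beta L as Z -> +oo. *)
Lemma boundary_form_limit (q : R -> R) (K beta L : R) :
  (forall z, 0 <= z -> 0 <= q z <= K * exp (- z)) -> is_integral_from0 q L ->
  forall eps, 0 < eps -> exists M, 0 <= M /\ forall Z, M <= Z ->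
    Rabs (1 - q Z + beta * RInt q 0 Z - (1 + beta * L)) < eps.
Proof.
intros Hq [Hub Hlim] eps Heps.
set (e1 := eps / (2 * (Rabs beta + 1))).
assert (Hbeta := Rabs_pos beta).
assert (He1 : 0 < e1) by (apply Rdiv_lt_0_compat; lra).
destruct (Hlim e1 He1) as [M1 [HM1 Hclose]].
destruct (scaled_exp_neg_eventually_small K (eps / 2) ltac:(lra)) as [M2 [HM2 Hsmall]].
exists (Rmax M1 M2). split; [eapply Rle_trans; [exact HM1 | apply Rmax_l] |].
intros Z HZ.
assert (HZ1 : M1 <= Z) by (eapply Rle_trans; [apply Rmax_l | exact HZ]).
assert (HZ2 : M2 <= Z) by (eapply Rle_trans; [apply Rmax_r | exact HZ]).
assert (Hboundary : 0 <= q Z < eps / 2).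
{ destruct (Hq Z ltac:(lra)) as [Hq0 HqK]. split; [exact Hq0 |].
  eapply Rle_lt_trans; [exact HqK | apply Hsmall; exact HZ2]. }
assert (Hpartial : Rabs (beta * (RInt q 0 Z - L)) <= eps / 2).
{ specialize (Hclose Z HZ1). specialize (Hub Z ltac:(lra)).
  rewrite Rabs_mult, (Rabs_left1 (RInt q 0 Z - L)) by lra.
  apply Rle_trans with (Rabs beta * e1); [apply Rmult_le_compat_l; lra |].
  unfold e1. apply (Rmult_le_reg_r (2 * (Rabs beta + 1))); [lra |].
  replace (Rabs beta * (eps / (2 * (Rabs beta + 1))) * (2 * (Rabs beta + 1)))
    with (Rabs beta * eps) by (field; lra).
  nra. }
replace (1 - q Z + beta * RInt q 0 Z - (1 + beta * L))
  with (- q Z + beta * (RInt q 0 Z - L)) by ring.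
eapply Rle_lt_trans; [apply Rabs_triang |].
rewrite Rabs_Ropp, Rabs_right by lra. lra.
Qed.

Lemma is_derive_RInt_from0 (q : R -> R) (y : R) :
  (forall z, continuous q z) -> is_derive (RInt q 0) y (q y).
Proof.
intros Hc. apply (is_derive_RInt q (RInt q 0) 0 y); [| apply Hc].
apply filter_forall. intros b. apply (RInt_correct (V := R_CompleteNormedModule)).
apply ex_RInt_everywhere. exact Hc.
Qed.

(* The Halfin-Whitt integrand h_n, and its Gaussian limit g as n -> +oo. *)
Definition hw_integrand (beta n z : R) : R :=
  exp (beta * z - n^2 * (exp (z/n) - 1 - z/n)).

Definition gauss_integrand (beta z : R) : R := exp (beta * z - z^2/2).

Lemma hw_integrand_continuous (beta n z : R) : 0 < n -> continuous (hw_integrand beta n) z.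
Proof.
intros Hn. apply (ex_derive_continuous (hw_integrand beta n)).
unfold hw_integrand. auto_derive. lra.
Qed.

Lemma gauss_integrand_continuous (beta z : R) : continuous (gauss_integrand beta) z.
Proof.
apply (ex_derive_continuous (gauss_integrand beta)).
unfold gauss_integrand. auto_derive; auto.
Qed.

(* h_n < g on (0, +oo), because n^2 (e^{z/n} - 1 - z/n) > z^2/2. *)
Lemma hw_lt_gauss (beta n z : R) : 0 < n -> 0 < z ->
  hw_integrand beta n z < gauss_integrand beta z.
Proof.
intros Hn Hz. unfold hw_integrand, gauss_integrand. apply exp_increasing.
assert (Hrem := exp_remainder_gt_half_square (z/n) ltac:(apply Rdiv_lt_0_compat; lra)).
assert (Hn2 : 0 < n^2) by (apply pow_lt; lra).
apply (Rmult_lt_compat_l (n^2)) in Hrem; [| exact Hn2].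
replace (n^2 * ((z/n)^2/2)) with (z^2/2) in Hrem by (field; lra).
lra.
Qed.

(* h_n z strictly increases with n, by the monotonicity of the scaled remainder. *)
Lemma hw_increasing (beta n1 n2 z : R) : 0 < n1 -> n1 < n2 -> 0 < z ->
  hw_integrand beta n1 z < hw_integrand beta n2 z.
Proof.
intros Hn1 Hn12 Hz. unfold hw_integrand. apply exp_increasing.
pose proof (scaled_exp_remainder_decreasing z n1 n2 Hz Hn1 Hn12). lra.
Qed.

(* Both integrands are dominated by exp ((beta+1)^2/2) * e^{-z}, using
   beta z - z^2/2 <= (beta+1)^2/2 - z. *)
Lemma gauss_integrand_bound (beta z : R) :
  0 <= gauss_integrand beta z <= exp ((beta + 1)^2/2) * exp (- z).
Proof.
unfold gauss_integrand. split; [left; apply exp_pos |].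
rewrite <- exp_plus. apply exp_le_mono.
pose proof (pow2_ge_0 (z - (beta + 1))). lra.
Qed.

Lemma hw_integrand_bound (beta n z : R) : 0 < n -> 0 <= z ->
  0 <= hw_integrand beta n z <= exp ((beta + 1)^2/2) * exp (- z).
Proof.
intros Hn Hz. split; [left; apply exp_pos |].
eapply Rle_trans; [| apply gauss_integrand_bound].
destruct Hz as [Hz | <-]; [left; apply hw_lt_gauss; assumption |].
right. unfold hw_integrand, gauss_integrand. f_equal.
unfold Rdiv. rewrite Rmult_0_l, exp_0. ring.
Qed.

Lemma hw_integral_exists (beta n : R) : 0 < n ->
  exists L, is_integral_from0 (hw_integrand beta n) L.
Proof.
intros Hn. apply (integral_from0_exists _ (exp ((beta + 1)^2/2))).
- intros z. apply hw_integrand_continuous. lra.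
- intros z Hz. apply hw_integrand_bound; assumption.
Qed.

(* With a = n^2, the Erlang integrand over [0, b] integrates to the boundary
   form of h_n at Z = n ln (1 + b); the antiderivative is
   -(1+t)^s e^{-a t} + beta int_0^{n ln(1+t)} h_n. *)
Lemma erlang_partial_integral (beta a n b : R) : 0 < n -> a = n^2 -> 0 <= b ->
  is_RInt (fun t => Rpower (1 + t) (a + beta * n) * (a * t / (1 + t)) * exp (- (a * t))) 0 b
    (1 - hw_integrand beta n (n * ln (1 + b))
       + beta * RInt (hw_integrand beta n) 0 (n * ln (1 + b))).
Proof.
intros Hn Ha Hb.
set (s := a + beta * n).
assert (Hc : forall z, continuous (hw_integrand beta n) z)
  by (intros; apply hw_integrand_continuous; lra).
assert (Hhw : forall x, -1 < x ->
  hw_integrand beta n (n * ln (1 + x)) = exp (s * ln (1 + x)) * exp (- (a * x))).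
{ intros x Hx. unfold hw_integrand.
  replace (n * ln (1 + x) / n) with (ln (1 + x)) by (field; lra).
  rewrite exp_ln, <- exp_plus by lra. f_equal. unfold s. rewrite Ha. ring. }
set (F := fun x => - (exp (s * ln (1 + x)) * exp (- (a * x)))
                   + beta * RInt (hw_integrand beta n) 0 (n * ln (1 + x))).
assert (Hvalue : 1 - hw_integrand beta n (n * ln (1 + b))
                   + beta * RInt (hw_integrand beta n) 0 (n * ln (1 + b))
                 = minus (F b) (F 0)).
{ unfold F. rewrite Hhw by lra. rewrite Rplus_0_r, ln_1, !Rmult_0_r, RInt_point, Ropp_0, exp_0.
  change (minus ?u ?v) with (u - v). change (zero : R) with 0. ring. }
rewrite Hvalue.
apply (is_RInt_derive F).
- intros x Hx. rewrite Rmin_left, Rmax_right in Hx by lra.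
  assert (Hd1 : is_derive (fun x => RInt (hw_integrand beta n) 0 (n * ln (1 + x))) x
                  (n / (1 + x) * hw_integrand beta n (n * ln (1 + x)))).
  { apply (is_derive_comp (RInt (hw_integrand beta n) 0) (fun x => n * ln (1 + x))).
    - apply is_derive_RInt_from0. exact Hc.
    - auto_derive; [lra | field; lra]. }
  assert (Hd2 : is_derive (fun x => - (exp (s * ln (1 + x)) * exp (- (a * x)))) x
     (- (s / (1 + x) * exp (s * ln (1 + x)) * exp (- (a * x))
         - a * exp (s * ln (1 + x)) * exp (- (a * x))))).
  { auto_derive; [lra | field; lra]. }
  assert (Hintegrand : Rpower (1 + x) s * (a * x / (1 + x)) * exp (- (a * x))
    = plus (- (s / (1 + x) * exp (s * ln (1 + x)) * exp (- (a * x))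
               - a * exp (s * ln (1 + x)) * exp (- (a * x))))
           (scal beta (n / (1 + x) * hw_integrand beta n (n * ln (1 + x))))).
  { change (plus ?u ?v) with (u + v). change (scal ?u ?v) with (u * v).
    rewrite Hhw by lra. unfold Rpower, s. rewrite Ha. field. lra. }
  cbv beta. rewrite Hintegrand.
  apply (is_derive_plus _ _ x _ _ Hd2 (is_derive_scal _ x beta _ Hd1)).
- intros x Hx. rewrite Rmin_left, Rmax_right in Hx by lra.
  apply (ex_derive_continuous
    (fun t => Rpower (1 + t) (a + beta * n) * (a * t / (1 + t)) * exp (- (a * t)))).
  unfold Rpower. auto_derive. repeat split; lra.
Qed.

Lemma ErlangC_hw_representation (beta a n L : R) :
  0 < n -> a = n^2 -> is_integral_from0 (hw_integrand beta n) L ->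
  ErlangC (a + beta * n) a = / (1 + beta * L).
Proof.
intros Hn Ha HL.
unfold ErlangC. f_equal. apply int_0_infty_val. split.
- intros b Hb. constructor. apply ex_RInt_Reals_0. eexists.
  apply erlang_partial_integral; eassumption.
- intros eps Heps.
  destruct (boundary_form_limit _ (exp ((beta + 1)^2/2)) beta L
              (fun z Hz => hw_integrand_bound beta n z Hn Hz) HL eps Heps)
    as [M [HM Hclose]].
  exists (exp (M / n)). intros b pr Hb.
  assert (Hb0 : 0 <= b) by (pose proof (exp_pos (M / n)); lra).
  rewrite <- (RInt_Reals _ _ _ pr),
    (is_RInt_unique _ _ _ _ (erlang_partial_integral beta a n b Hn Ha Hb0)).
  apply Hclose.
  (* Z = n ln (1 + b) >= M since ln (1 + b) >= ln (exp (M / n)). *)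
  assert (Hln : M / n <= ln (1 + b)).
  { rewrite <- (ln_exp (M / n)). left. apply ln_increasing; [apply exp_pos | lra]. }
  apply (Rmult_le_compat_l n) in Hln; [| lra].
  replace (n * (M / n)) with M in Hln by (field; lra). exact Hln.
Qed.

Lemma ErlangC_scaled (beta a : R) : 0 < a ->
  exists L, is_integral_from0 (hw_integrand beta (sqrt a)) L /\
    ErlangC (a + beta * sqrt a) a = / (1 + beta * L).
Proof.
intros Ha. assert (Hn : 0 < sqrt a) by (apply sqrt_lt_R0; exact Ha).
destruct (hw_integral_exists beta (sqrt a) Hn) as [L HL].
exists L. split; [exact HL |].
apply ErlangC_hw_representation; [exact Hn | rewrite pow2_sqrt; lra | exact HL].
Qed.

Lemma std_normal_pdf_pos (x : R) : 0 < std_normal_pdf x.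
Proof.
unfold std_normal_pdf. apply Rdiv_lt_0_compat; [apply exp_pos |].
apply sqrt_lt_R0. pose proof PI_RGT_0. lra.
Qed.

Lemma std_normal_pdf_shift (beta x : R) :
  std_normal_pdf beta * gauss_integrand beta (beta - x) = std_normal_pdf x.
Proof.
unfold std_normal_pdf, gauss_integrand.
replace (exp (- x^2 / 2)) with (exp (- (beta^2) / 2) * exp (beta * (beta - x) - (beta - x)^2/2))
  by (rewrite <- exp_plus; f_equal; field).
field. apply Rgt_not_eq, sqrt_lt_R0. pose proof PI_RGT_0. lra.
Qed.

(* int_c^beta phi = phi (beta) int_0^{beta - c} g, by the substitution z = beta - x. *)
Lemma std_normal_partial_integral (beta c : R) : c <= beta ->
  is_RInt std_normal_pdf c beta
    (std_normal_pdf beta * RInt (gauss_integrand beta) 0 (beta - c)).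
Proof.
intros Hc.
set (G := fun x => - std_normal_pdf beta * RInt (gauss_integrand beta) 0 (beta - x)).
assert (Hvalue : std_normal_pdf beta * RInt (gauss_integrand beta) 0 (beta - c)
                 = minus (G beta) (G c)).
{ unfold G. rewrite Rminus_diag, RInt_point.
  change (minus ?u ?v) with (u - v). change (zero : R) with 0. ring. }
rewrite Hvalue.
apply (is_RInt_derive G).
- intros x _.
  assert (Hd : is_derive (fun x => RInt (gauss_integrand beta) 0 (beta - x)) x
                 (-1 * gauss_integrand beta (beta - x))).
  { apply (is_derive_comp (RInt (gauss_integrand beta) 0) (fun x => beta - x)).
    - apply is_derive_RInt_from0. intros; apply gauss_integrand_continuous.
    - auto_derive; auto; ring. }
  rewrite <- (std_normal_pdf_shift beta x).
  assert (Hscaled : std_normal_pdf beta * gauss_integrand beta (beta - x)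
                    = scal (- std_normal_pdf beta) (-1 * gauss_integrand beta (beta - x))).
  { change (scal ?u ?v) with (u * v). ring. }
  rewrite Hscaled.
  apply (is_derive_scal _ x (- std_normal_pdf beta) _ Hd).
- intros x _. apply (ex_derive_continuous std_normal_pdf).
  unfold std_normal_pdf. auto_derive; auto.
Qed.

Lemma std_normal_cdf_representation (beta L : R) :
  is_integral_from0 (gauss_integrand beta) L ->
  std_normal_cdf beta = std_normal_pdf beta * L.
Proof.
intros [Hub Hlim]. unfold std_normal_cdf. apply int_minfty_to_val. split.
- intros c Hc. constructor. apply ex_RInt_Reals_0. eexists.
  apply std_normal_partial_integral. exact Hc.
- intros eps Heps.
  set (p := std_normal_pdf beta). assert (Hp : 0 < p) by apply std_normal_pdf_pos.
  destruct (Hlim (eps / p) ltac:(apply Rdiv_lt_0_compat; lra)) as [M [HM Hclose]].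
  exists (beta - M). intros c pr Hc.
  rewrite <- (RInt_Reals _ _ _ pr),
    (is_RInt_unique _ _ _ _ (std_normal_partial_integral beta c ltac:(lra))).
  fold p.
  specialize (Hclose (beta - c) ltac:(lra)). specialize (Hub (beta - c) ltac:(lra)).
  rewrite <- Rmult_minus_distr_l, Rabs_mult, Rabs_right, Rabs_left1 by lra.
  apply (Rmult_lt_compat_l p) in Hclose; [| lra].
  replace (p * (L - eps / p)) with (p * L - eps) in Hclose by (field; lra).
  nra.
Qed.

Lemma inv_one_plus_decreasing (beta L1 L2 : R) : 0 < beta -> 0 <= L1 -> L1 < L2 ->
  / (1 + beta * L2) < / (1 + beta * L1).
Proof.
intros Hb HL1 HL12.
assert (0 <= beta * L1) by (apply Rmult_le_pos; lra).
assert (beta * L1 < beta * L2) by (apply Rmult_lt_compat_l; lra).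
apply Rinv_lt_contravar; [apply Rmult_lt_0_compat |]; lra.
Qed.

(* Monotonicity compares L_{sqrt a1} < L_{sqrt a2}; the bound compares
   L_{sqrt a} < int_0^oo g = Phi (beta) / phi (beta). *)
Theorem mainTheorem1 (beta : R) (hbeta : 0 < beta) :
  (forall a1 a2 : R, 0 < a1 -> a1 < a2 ->
     ErlangC (a2 + beta * sqrt a2) a2 < ErlangC (a1 + beta * sqrt a1) a1) /\
  (forall a : R, 0 < a -> Cstar beta < ErlangC (a + beta * sqrt a) a).
Proof.
split.
- intros a1 a2 Ha1 Ha12.
  destruct (ErlangC_scaled beta a1 Ha1) as [L1 [HL1 ->]].
  destruct (ErlangC_scaled beta a2 ltac:(lra)) as [L2 [HL2 ->]].
  assert (Hn1 : 0 < sqrt a1) by (apply sqrt_lt_R0; exact Ha1).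
  assert (Hn12 : sqrt a1 < sqrt a2) by (apply sqrt_lt_1; lra).
  assert (Hn2 : 0 < sqrt a2) by lra.
  apply inv_one_plus_decreasing; [exact hbeta | exact (integral_from0_nonneg _ _ HL1) |].
  apply (integral_from0_lt _ _ _ _ (fun z => hw_integrand_continuous beta _ z Hn1)
           (fun z => hw_integrand_continuous beta _ z Hn2)
           (fun z Hz => hw_increasing beta _ _ z Hn1 Hn12 Hz) HL1 HL2).
- intros a Ha.
  destruct (ErlangC_scaled beta a Ha) as [L [HL ->]].
  destruct (integral_from0_exists (gauss_integrand beta) (exp ((beta + 1)^2/2))
              (gauss_integrand_continuous beta) (fun z _ => gauss_integrand_bound beta z))
    as [Lg HLg].
  assert (Hn : 0 < sqrt a) by (apply sqrt_lt_R0; exact Ha).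
  unfold Cstar. rewrite (std_normal_cdf_representation beta Lg HLg).
  pose proof (std_normal_pdf_pos beta).
  replace (std_normal_pdf beta * Lg / std_normal_pdf beta) with Lg by (field; lra).
  apply inv_one_plus_decreasing; [exact hbeta | exact (integral_from0_nonneg _ _ HL) |].
  apply (integral_from0_lt _ _ _ _ (fun z => hw_integrand_continuous beta _ z Hn)
           (gauss_integrand_continuous beta)
           (fun z Hz => hw_lt_gauss beta _ z Hn Hz) HL HLg).
Qed.
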